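(* Let $\tau\subseteq\sigma$ be two topologies on a set $X$. If $(X,\tau,\mathcal{HK}_\tau)$ is a $T_{\mathcal{HK}_\tau}$-space, then $(X,\sigma,\mathcal{HK}_\sigma)$ is a $T_{\mathcal{HK}_\sigma}$-space.
   Context: For a topology $\rho$ on $X$, $\mathcal{HK}_\rho$ denotes the ideal of $\rho$-hereditarily compact subsets of $X$, i.e. sets all of whose subsets are $\rho$-compact. For an ideal $\mathcal{I}$, $(X,\rho,\mathcal{I})$ is a $T_{\mathcal{I}}$-space if for every $I\in\mathcal{I}$ and every $x\in X\setminus I$ there is a set $A_x$ with $x\in A_x$, $A_x\cap I=\emptyset$, and $A_x$ $\rho$-open or $\rho$-closed. *)

From Stdlib Require Import List.

Set Implicit Arguments.

Definition subset {X : Type} (A B : X -> Prop) : Prop := forall x, A x -> B x.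

Definition is_topology {X : Type} (rho : (X -> Prop) -> Prop) : Prop :=
  rho (fun _ => False) /\ rho (fun _ => True) /\
  (forall F : (X -> Prop) -> Prop, (forall U, F U -> rho U) ->
     rho (fun x => exists U, F U /\ U x)) /\
  (forall U V, rho U -> rho V -> rho (fun x => U x /\ V x)).

Definition compact_in {X : Type} (rho : (X -> Prop) -> Prop) (K : X -> Prop) : Prop :=
  forall C : (X -> Prop) -> Prop,
    (forall U, C U -> rho U) ->
    (forall x, K x -> exists U, C U /\ U x) ->
    exists l : list (X -> Prop),
      (forall U, In U l -> C U) /\ (forall x, K x -> exists U, In U l /\ U x).

Definition HK {X : Type} (rho : (X -> Prop) -> Prop) (A : X -> Prop) : Prop :=
  forall B, subset B A -> compact_in rho B.

Definition T_I_space {X : Type} (rho : (X -> Prop) -> Prop)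
    (I : (X -> Prop) -> Prop) : Prop :=
  forall A, I A -> forall x, ~ A x ->
    exists Ax : X -> Prop, Ax x /\ (forall y, Ax y -> ~ A y) /\
      (rho Ax \/ rho (fun y => ~ Ax y)).

(* Every tau-open cover is a sigma-open cover, so sigma-compact sets are
   tau-compact and HK sigma is contained in HK tau; and a set that
   is tau-open or tau-closed is also sigma-open or sigma-closed. *)

Section CoarserTopology.

Context {X : Type} {tau sigma : (X -> Prop) -> Prop}.
Hypothesis tau_sub_sigma : forall U, tau U -> sigma U.

Lemma compact_in_coarser (K : X -> Prop) :
  compact_in sigma K -> compact_in tau K.
Proof.
  intros HK C HC Hcov.
  apply HK; auto.
Qed.

Lemma HK_coarser (A : X -> Prop) : HK sigma A -> HK tau A.
Proof.
  intros HA B HB.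
  apply compact_in_coarser, HA, HB.
Qed.

End CoarserTopology.

Lemma T_I_space_mono (X : Type) (rho rho' I I' : (X -> Prop) -> Prop) :
  (forall U, rho U -> rho' U) -> (forall A, I' A -> I A) ->
  T_I_space rho I -> T_I_space rho' I'.
Proof.
  intros Hrho HI HT A HA x Hx.
  destruct (HT A (HI A HA) x Hx) as [Ax [HxAx [Hdisj Hoc]]].
  exists Ax; split; [exact HxAx | split; [exact Hdisj |]].
  destruct Hoc as [Hopen | Hclosed]; [left | right]; auto.
Qed.

Theorem mainTheorem5 (X : Type) (tau sigma : (X -> Prop) -> Prop) :
  is_topology tau -> is_topology sigma ->
  (forall U, tau U -> sigma U) ->
  T_I_space tau (HK tau) -> T_I_space sigma (HK sigma).
Proof.
  intros _ _ Hts.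
  apply T_I_space_mono; [exact Hts |].
  exact (HK_coarser Hts).
Qed.
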